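(* Let $n\ge3$. For $k\ge0$ let $c_k$ be the number of elements of $K^{\infty}_n$ of length $k$, and for $k\ge1$, $1\le i\le n$, let $c_{k;i}$ be the number of elements of length $k$ whose canonical form begins with $y_i$. Then $c_0=1$, $c_{1;i}=1$ for all $i$, $c_k=\sum_{i=1}^n c_{k;i}$ for $k\ge1$, and for $k\ge2$: $$c_{k;j}=\sum_{i=\max(1,j-1)}^{n} c_{k-1;i}\quad (j\ne n),\qquad c_{k;n}=\sum_{i=n-2}^{n}c_{k-1;i}.$$
   Context: $K^{\infty}_n=\langle y_1,\dots,y_n\mid y_iy_j=y_jy_i\ (j+2\le i\le n-1),\ y_ny_k=y_ky_n\ (1\le k\le n-3)\rangle$. The canonical form of an element is its smallest representative word in length-lexicographic order with $y_1<\cdots<y_n$. *)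

From mathcomp Require Import all_boot.
Set Implicit Arguments. Unset Strict Implicit. Unset Printing Implicit Defensive.

(* Letters: y_p (1 <= p <= n) is represented by the ordinal p-1 : 'I_n,
   so the order y_1 < ... < y_n is the order on ordinals.  Below, relations
   are expressed on the 1-based indices p = a.+1. *)

(* the defining relations y_p y_q = y_q y_p of K^oo_n (one orientation) *)
Definition relK (n p q : nat) : bool :=
  ((q + 2 <= p) && (p <= n - 1)) || ((p == n) && (1 <= q) && (q <= n - 3)).

Definition commK (n a b : nat) : bool := relK n a.+1 b.+1 || relK n b.+1 a.+1.

Definition swap_at (i : nat) (s : seq nat) : seq nat :=
  take i s ++ [:: nth 0 s i.+1; nth 0 s i] ++ drop i.+2 s.

Definition stepK (n k : nat) (s t : k.-tuple 'I_n) : bool :=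
  [exists i : 'I_k, [&& i.+1 < k,
     commK n (nth 0 (map val s) i) (nth 0 (map val s) i.+1) &
     map val t == swap_at i (map val s)]].

(* equality in the monoid K^oo_n of two words (of the same length k; all
   relations are length preserving) *)
Definition eqK (n k : nat) (s t : k.-tuple 'I_n) : bool := connect (@stepK n k) s t.

(* the elements of K^oo_n of length k, as equivalence classes of words *)
Definition elemsK (n k : nat) : {set {set k.-tuple 'I_n}} :=
  [set [set t | eqK s t] | s : k.-tuple 'I_n].

Fixpoint lexle (s t : seq nat) : bool :=
  match s, t with
  | [::], _ => true
  | _ :: _, [::] => false
  | a :: s', b :: t' => (a < b) || ((a == b) && lexle s' t')
  end.

(* w is the canonical form of its element: the smallest representative in
   length-lexicographic order (all representatives have the same length) *)
Definition canonK (n k : nat) (w : k.-tuple 'I_n) : bool :=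
  [forall t : k.-tuple 'I_n, eqK w t ==> lexle (map val w) (map val t)].

Definition cK (n k : nat) : nat := #|elemsK n k|.

Definition cKi (n k i : nat) : nat :=
  #|[set X in elemsK n k |
      [exists w in X, canonK w && (head 0 (map val w) == i.-1) && (0 < k)]]|.

From mathcomp Require Import all_boot zify.
Set Implicit Arguments. Unset Strict Implicit. Unset Printing Implicit Defensive.

(* The canonical forms of K^oo_n are exactly the words without an adjacent
   commuting descent y_a y_b (b < a, y_a y_b = y_b y_a).  Such a word w is
   lexicographically minimal in its class: if t is equivalent to w and starts
   with b, then b can be pulled to the front of w across commuting letters;
   for the commutation relation of K^oo_n, commuting descents chain
   ([c < b < a], [a ~ b], [b ~ c] imply [a ~ c]), so a letter b smaller than
   the head of w cannot be pulled across it, and the head of w is b.  Hence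
   c_k and c_{k;i} count such words, and a word y_j u has no commuting descent
   iff u has none and u does not start with a letter commuting with and
   smaller than y_j; this gives the recursion. *)

Lemma commK_sym n : symmetric (commK n).
Proof. by move=> a b; rewrite /commK orbC. Qed.

Lemma commK_irr n : irreflexive (commK n).
Proof. by move=> a; rewrite /commK /relK; lia. Qed.

Lemma commK_desc n a b c : c < b < a -> commK n a b -> commK n b c -> commK n a c.
Proof. by rewrite /commK /relK; lia. Qed.

Lemma lexle_refl s : lexle s s.
Proof. by elim: s => //= a s ->; rewrite eqxx orbT. Qed.

Lemma lexle_total s t : lexle s t || lexle t s.
Proof.
elim: s t => [|a s IH] [|b t] //=.
by case: (ltngtP a b) => //= <-; rewrite eqxx.
Qed.

Lemma lexle_trans s t u : lexle s t -> lexle t u -> lexle s u.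
Proof.
elim: s t u => [|a s IH] [|b t] [|c u] //=.
case/orP=> [lab|/andP [/eqP <- lst]]; case/orP=> [lbc|/andP [/eqP <- ltu]].
- by rewrite (ltn_trans lab lbc).
- by rewrite lab.
- by rewrite lbc.
- by rewrite eqxx (IH _ _ lst ltu) orbT.
Qed.

Lemma lexle_anti s t : lexle s t -> lexle t s -> s = t.
Proof.
elim: s t => [|a s IH] [|b t] //=.
by case: (ltngtP a b) => //= <-; rewrite ?eqxx => /IH st /st ->.
Qed.

Lemma lexle_cat2l p s t : lexle (p ++ s) (p ++ t) = lexle s t.
Proof. by elim: p => //= a p ->; rewrite ltnn eqxx. Qed.

Lemma not_sorted_split (T : Type) (e : rel T) u : ~~ sorted e u ->
  exists p x y r, u = p ++ x :: y :: r /\ ~~ e x y.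
Proof.
elim: u => [//|a [//|b u] IH] /=; rewrite negb_and.
case/orP=> [nab|/IH [p [x [y [r [-> nxy]]]]]]; first by exists [::], a, b, u.
by exists (a :: p), x, y, r.
Qed.

Lemma split_at_nth (u : seq nat) i : i.+1 < size u ->
  u = take i u ++ nth 0 u i :: nth 0 u i.+1 :: drop i.+2 u.
Proof.
by move=> ltiu; rewrite -(drop_nth 0 ltiu) -(drop_nth 0 (ltnW ltiu)) cat_take_drop.
Qed.

Lemma swap_at_cat p x y r : swap_at (size p) (p ++ x :: y :: r) = p ++ y :: x :: r.
Proof.
by rewrite /swap_at; elim: p => [|a p /= ->]; rewrite /= ?drop0.
Qed.

Section PartialCommutation.

Variable comm : rel nat.
Hypothesis comm_sym : symmetric comm.
Hypothesis comm_irr : irreflexive comm.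
Hypothesis comm_desc : forall a b c, c < b < a -> comm a b -> comm b c -> comm a c.

Definition comm_swap (u v : seq nat) : Prop :=
  exists p x y r, [/\ comm x y, u = p ++ x :: y :: r & v = p ++ y :: x :: r].

Inductive comm_equiv : seq nat -> seq nat -> Prop :=
| comm_equiv_refl u : comm_equiv u u
| comm_equiv_swap u v w : comm_swap u v -> comm_equiv v w -> comm_equiv u w.

Lemma comm_equiv_size u v : comm_equiv u v -> size u = size v.
Proof. by elim=> // ? ? ? [p [x [y [r [_ -> ->]]]]] _ <-; rewrite !size_cat. Qed.

(* [pullable b u]: b occurs in u and commutes with every letter before its
   first occurrence, i.e. u is equivalent to b :: rem b u. *)
Fixpoint pullable (b : nat) (u : seq nat) : bool :=
  if u is x :: u' then (x == b) || comm x b && pullable b u' else false.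

Lemma comm_swap_pullable b u v : comm_swap u v ->
  pullable b u = pullable b v /\ (rem b u = rem b v \/ comm_swap (rem b u) (rem b v)).
Proof.
case=> p [x [y [r [cxy -> ->]]]].
elim: p => [|z p [IH1 IH2]] /=; last first.
  case: (eqVneq z b) => [_|_] /=; first by split=> //; right; exists p, x, y, r.
  split; first by rewrite IH1.
  case: IH2 => [->|[p' [x' [y' [r' [c' -> ->]]]]]]; first by left.
  by right; exists (z :: p'), x', y', r'.
case: (eqVneq x b) => [exb|nxb]; case: (eqVneq y b) => [eyb|nyb] /=.
- by rewrite exb eyb comm_irr in cxy.
- by rewrite -exb comm_sym cxy; split=> //; left.
- by rewrite -eyb cxy; split=> //; left.
- split; first by rewrite !andbA (andbC (comm x b)).
  by right; exists [::], x, y, (rem b r).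
Qed.

Lemma comm_equiv_pullable b u v : comm_equiv u v ->
  pullable b u = pullable b v /\ comm_equiv (rem b u) (rem b v).
Proof.
elim=> [w|w1 w2 w3 s12 _ [IH1 IH2]]; first by split=> //; constructor.
have [-> [->|s12']] := comm_swap_pullable b s12; split=> //.
exact: comm_equiv_swap s12' IH2.
Qed.

Definition reduced_pair (a b : nat) : bool := ~~ ((b < a) && comm a b).

Lemma reduced_not_pullable a b w :
  path reduced_pair a w -> b < a -> comm a b -> ~~ pullable b w.
Proof.
elim: w a => [//|c w IH] a /= /andP [rac pw] lba cab.
apply/negP => /orP [/eqP ecb|/andP [ccb pbw]].
  by move: rac; rewrite /reduced_pair ecb lba cab.
case: (ltngtP b c) => [lbc|lcb|ebc].
- by rewrite (negbTE (IH c pw lbc ccb)) in pbw.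
- have cac : comm a c by apply: (comm_desc _ cab); rewrite ?lcb // comm_sym.
  by move: rac; rewrite /reduced_pair cac (ltn_trans lcb lba).
- by rewrite ebc comm_irr in ccb.
Qed.

Lemma reduced_lexle w t : sorted reduced_pair w -> comm_equiv w t -> lexle w t.
Proof.
elim: w t => [//|a w IH] [|b t] sw wt; first by have := comm_equiv_size wt.
have [pull rem_wt] := comm_equiv_pullable b wt.
have /= := pull; rewrite eqxx /=.
case: (eqVneq a b) => [eab|nab] /= pbw.
  subst b; move: rem_wt; rewrite /= eqxx => /IH ->; rewrite ?eqxx ?orbT //.
  exact: path_sorted sw.
case/andP: pbw => cab pbw; case: (ltngtP a b) => // [lba|eab]; last by rewrite eab eqxx in nab.
by have := reduced_not_pullable sw lba cab; rewrite pbw.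
Qed.

End PartialCommutation.

Section Words.

Variables n k : nat.
Implicit Types s t w : k.-tuple 'I_n.

Lemma map_val_tuple (u : seq nat) : size u = k -> all (fun a => a < n) u ->
  exists t : k.-tuple 'I_n, map val t = u.
Proof.
move=> szu un; have val_pmap : map val (pmap insub u : seq 'I_n) = u.
  by rewrite (pmap_filter (insubK _)) (eq_filter (isSome_insub _)); apply/all_filterP.
have sz : size (pmap insub u : seq 'I_n) == k by rewrite -szu -{2}val_pmap size_map.
by exists (Tuple sz).
Qed.

Lemma stepK_swapP s t : stepK s t <-> comm_swap (commK n) (map val s) (map val t).
Proof.
split.
  case/existsP=> i /and3P [ltik cst /eqP ->]; set u := map val s in cst *.
  have ltiu : i.+1 < size u by rewrite size_map size_tuple.
  exists (take i u), (nth 0 u i), (nth 0 u i.+1), (drop i.+2 u).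
  by split=> //; apply: split_at_nth.
case=> p [x [y [r [cxy es et]]]].
have ltk : (size p).+1 < k.
  by rewrite -(size_tuple s) -(size_map val) es size_cat /=; lia.
apply/existsP; exists (Ordinal (ltnW ltk)); rewrite /= ltk es swap_at_cat et eqxx andbT.
by rewrite !nth_cat ltnn subnn ltnNge leqnSn subSnn /=.
Qed.

Lemma stepK_sym : symmetric (@stepK n k).
Proof.
suff sym s t : stepK s t -> stepK t s by move=> s t; apply/idP/idP; apply: sym.
move=> /stepK_swapP [p [x [y [r [cxy es et]]]]]; apply/stepK_swapP.
by exists p, y, x, r; rewrite commK_sym.
Qed.

Lemma eqK_sym s t : eqK s t = eqK t s.
Proof. exact: (sym_connect_sym stepK_sym). Qed.

Lemma eqK_comm_equiv s t : eqK s t -> comm_equiv (commK n) (map val s) (map val t).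
Proof.
case/connectP=> p; elim: p s => [|x p IH] s /=; first by move=> _ ->; constructor.
by case/andP=> /stepK_swapP sx px et; apply: comm_equiv_swap sx (IH _ px et).
Qed.

Lemma canonKE w : canonK w = sorted (reduced_pair (commK n)) (map val w).
Proof.
apply/idP/idP => [cw|sw]; last first.
  apply/forallP=> t; apply/implyP=> /eqK_comm_equiv; apply: reduced_lexle sw.
  - exact: commK_sym.
  - exact: commK_irr.
  - exact: commK_desc.
apply/negPn/negP=> /not_sorted_split [p [x [y [r [ew /negPn /andP [lyx cxy]]]]]].
have [t et] : exists t : k.-tuple 'I_n, map val t = p ++ y :: x :: r.
  apply: map_val_tuple; first by rewrite -(size_tuple w) -(size_map val) ew !size_cat.
  have : all (fun a => a < n) (map val w) by apply/allP=> a /mapP [b _ ->]; apply: ltn_ord.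
  by rewrite ew !all_cat /= => /and4P [-> -> -> ->].
have swt : stepK w t by apply/stepK_swapP; exists p, x, y, r.
have := implyP (forallP cw t) (connect1 swt).
by rewrite ew et lexle_cat2l /= ltnNge (ltnW lyx) (gtn_eqF lyx).
Qed.

Definition eqK_class s : {set k.-tuple 'I_n} := [set t | eqK s t].

Lemma eqK_class_canon s : exists2 w, w \in eqK_class s & canonK w.
Proof.
pose lexw := fun w t : k.-tuple 'I_n => lexle (map val w) (map val t).
have lexw_total : total lexw by move=> ? ?; apply: lexle_total.
have lexw_trans : transitive lexw by move=> ? ? ?; apply: lexle_trans.
have s_cls : s \in enum (eqK_class s) by rewrite mem_enum inE /eqK connect0.
case es: (sort lexw (enum (eqK_class s))) => [|w S].
  by move: s_cls; rewrite -(mem_sort lexw) es.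
have w_cls : w \in eqK_class s by rewrite -mem_enum -(mem_sort lexw) es mem_head.
exists w => //; apply/forallP=> t; apply/implyP=> wt.
have : t \in w :: S.
  rewrite -es mem_sort mem_enum inE; rewrite inE in w_cls.
  exact: connect_trans w_cls wt.
rewrite inE => /orP [/eqP ->|tS]; first exact: lexle_refl.
have := sort_sorted lexw_total (enum (eqK_class s)); rewrite es /=.
by move=> /(order_path_min lexw_trans) /allP; apply.
Qed.

Lemma canonK_inj w1 w2 : canonK w1 -> canonK w2 -> eqK w1 w2 -> w1 = w2.
Proof.
move=> /forallP c1 /forallP c2 e12.
have l12 := implyP (c1 w2) e12.
have l21 := implyP (c2 w1) (etrans (eqK_sym _ _) e12).
exact/val_inj/(inj_map val_inj)/lexle_anti.
Qed.

Lemma card_elemsK_canon (P : pred (k.-tuple 'I_n)) : (forall w, P w -> canonK w) ->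
  #|[set X in elemsK n k | [exists w in X, P w]]| = #|[set w | P w]|.
Proof.
move=> P_canon.
have -> : [set X in elemsK n k | [exists w in X, P w]] = eqK_class @: [set w | P w].
  apply/setP => X; rewrite inE; apply/andP/imsetP.
    case=> /imsetP [s _ ->] /existsP [w /andP [sw Pw]].
    exists w; rewrite ?inE //; apply/setP => t; rewrite !inE.
    rewrite inE in sw; apply/idP/idP => [st|wt]; last exact: connect_trans sw wt.
    have ws : eqK w s by rewrite eqK_sym.
    exact: connect_trans ws st.
  case=> w; rewrite inE => Pw ->; split; first by apply/imsetP; exists w.
  by apply/existsP; exists w; rewrite !inE /eqK connect0.
rewrite card_in_imset // => w1 w2; rewrite !inE => P1 P2 e12.
apply: canonK_inj (P_canon _ P1) (P_canon _ P2) _.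
have : w2 \in eqK_class w1 by rewrite e12 inE /eqK connect0.
by rewrite inE.
Qed.

End Words.

Section Counting.

Variable n : nat.

Definition nreduced (k h : nat) : nat :=
  #|[set w : k.-tuple 'I_n |
      sorted (reduced_pair (commK n)) (map val w) && (head 0 (map val w) == h)]|.

Lemma cK_canon k : cK n k = #|[set w : k.-tuple 'I_n | canonK w]|.
Proof.
rewrite /cK -(card_elemsK_canon (P := fun w => canonK w)) //.
apply: eq_card => X; rewrite [in RHS]inE; apply/idP/andP => [XK|[]//].
split=> //; case/imsetP: XK => s _ ->.
by have [w sw cw] := eqK_class_canon s; apply/existsP; exists w; rewrite sw.
Qed.

Lemma cK0 : cK n 0 = 1.
Proof.
rewrite cK_canon -[RHS](expn0 #|'I_n|) -card_tuple -cardsT.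
apply: eq_card => w; rewrite !inE canonKE.
by rewrite (size0nil (_ : size (map val w) = 0)) // size_map size_tuple.
Qed.

Lemma cKi_nreduced k i : 0 < k -> cKi n k i = nreduced k i.-1.
Proof.
move=> k_gt0; rewrite /cKi (card_elemsK_canon
  (P := fun w => canonK w && (head 0 (map val w) == i.-1) && (0 < k))).
  by apply: eq_card => w; rewrite !inE k_gt0 andbT canonKE.
by move=> w /andP [/andP []].
Qed.

Lemma head_map_val k (t : k.+1.-tuple 'I_n) : head 0 (map val t) = val (thead t).
Proof. by case: t => [[|x s] szs]. Qed.

Lemma card_by_thead k (A : {set k.+1.-tuple 'I_n}) :
  #|A| = \sum_(i : 'I_n) #|[set t in A | thead t == i]|.
Proof.
rewrite -sum1_card (partition_big (fun t => thead t) predT) //=.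
by apply: eq_bigr => i _; rewrite -sum1_card; apply: eq_bigl => t; rewrite !inE.
Qed.

Lemma cK_sum_nreduced k : cK n k.+1 = \sum_(h < n) nreduced k.+1 h.
Proof.
rewrite cK_canon card_by_thead; apply: eq_bigr => i _; apply: eq_card => w.
by rewrite !inE head_map_val canonKE.
Qed.

Lemma nreduced1 h : h < n -> nreduced 1 h = 1.
Proof.
move=> lthn; rewrite /nreduced -[RHS](cards1 [tuple Ordinal lthn]).
apply: eq_card => -[[|a [|b s]] //= sz1]; rewrite !inE.
apply/eqP/eqP => [eah|/(congr1 val) [->] //].
by apply: val_inj; congr [:: _]; apply: val_inj.
Qed.

Lemma nreduced_cons k h (lthn : h < n) : nreduced k.+2 h =
  #|[set t : k.+1.-tuple 'I_n |
      sorted (reduced_pair (commK n)) (map val t) && reduced_pair (commK n) h (thead t)]|.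
Proof.
have cons_inj : injective (@cons_tuple k.+1 _ (Ordinal lthn)).
  by move=> t1 t2 /(congr1 val) [] /val_inj.
rewrite /nreduced -(card_imset _ cons_inj).
apply: eq_card => w; rewrite inE; apply/andP/imsetP => [[sw hw]|[t]]; last first.
  rewrite inE => /andP [st rht] ->.
  rewrite -head_map_val in rht; split=> //=.
  by case: (map val t) st rht => //= ? ? -> ->.
have ehw : val (thead w) = h by rewrite -head_map_val; apply/eqP.
exists [tuple of behead w].
  rewrite inE -(head_map_val [tuple of behead w]) /=; move: sw; rewrite (tuple_eta w) /= -ehw.
  have : size (map val (behead w)) = k.+1 by rewrite size_map size_behead size_tuple.
  by case: (map val (behead w)) => //= ? ? _ /andP [-> ->].
apply: val_inj; rewrite /= [in LHS](tuple_eta w) /=; congr (_ :: _).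
exact: val_inj.
Qed.

Lemma nreduced_rec k h : h < n ->
  nreduced k.+2 h = \sum_(i < n | reduced_pair (commK n) h i) nreduced k.+1 i.
Proof.
move=> lthn; rewrite nreduced_cons // card_by_thead [RHS]big_mkcond; apply: eq_bigr => i _.
case: ifP => rhi; last first.
  by apply: eq_card0 => t; rewrite !inE; case: eqP => [->|]; rewrite ?rhi ?andbF.
apply: eq_card => t; rewrite !inE head_map_val val_eqE.
by case: eqP => [->|]; rewrite ?rhi ?andbT ?andbF.
Qed.

End Counting.

Lemma reduced_pair_commKE n h i : 3 <= n -> h < n ->
  reduced_pair (commK n) h i = ((if h == n.-1 then n - 3 else h.-1) <= i).
Proof.
move=> n_ge3 lthn; rewrite /reduced_pair /commK /relK.
by case: ifP => /eqP hn; apply/idP/idP; lia.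
Qed.

Lemma cKi_succ n k j : 3 <= n -> 0 < k -> 1 <= j <= n ->
  cKi n k.+1 j = \sum_((if j == n then n - 2 else maxn 1 (j - 1)) <= i < n.+1) cKi n k i.
Proof.
case: k => // k n_ge3 _ /andP [j_gt0 j_le_n].
rewrite cKi_nreduced // nreduced_rec; last by lia.
have -> : (if j == n then n - 2 else maxn 1 (j - 1))
        = (if j.-1 == n.-1 then n - 3 else j.-1.-1).+1 by case: eqP; case: eqP; lia.
rewrite big_add1 big_geq_mkord /=.
apply: eq_big => [i|i _]; first by rewrite reduced_pair_commKE //; lia.
by rewrite cKi_nreduced.
Qed.

Theorem corollary2 (n : nat) : 3 <= n ->
  [/\ cK n 0 = 1,
      (forall i, 1 <= i <= n -> cKi n 1 i = 1),
      (forall k, 1 <= k -> cK n k = \sum_(1 <= i < n.+1) cKi n k i),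
      (forall k j, 2 <= k -> 1 <= j <= n -> j != n ->
         cKi n k j = \sum_(maxn 1 (j - 1) <= i < n.+1) cKi n k.-1 i) &
      (forall k, 2 <= k ->
         cKi n k n = \sum_(n - 2 <= i < n.+1) cKi n k.-1 i)].
Proof.
move=> n_ge3; split.
- exact: cK0.
- by move=> i /andP [i_gt0 i_le_n]; rewrite cKi_nreduced // nreduced1 //; lia.
- case=> // k _; rewrite cK_sum_nreduced big_add1 big_mkord /=.
  by apply: eq_bigr => i _; rewrite cKi_nreduced.
- case=> // k j k_gt1 j_range /negbTE j_neq_n.
  by rewrite cKi_succ // j_neq_n.
- case=> // k k_gt1; rewrite cKi_succ ?eqxx //; lia.
Qed.
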